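(* Let $k$ be a complete non-Archimedean valued field with valuation $\nu:k\to\mathbb T$, and let $G=\operatorname{Spec}A$ be an affine group scheme of finite type over $k$, so $A$ is a finitely generated Hopf algebra over $k$ with coproduct $\Delta$. For all $g,h\in\operatorname{Hom}_k(A,\mathbb T)$ we have $g\star h\subseteq g*h$, where $\star$ and $*$ are the hyperoperations defined below.
   Context: The tropical hyperfield $\mathbb T=\mathbb R\cup\{-\infty\}$ has multiplication given by usual addition ($-\infty$ absorbing) and hyperaddition $a\oplus b=\max\{a,b\}$ if $a\neq b$, $a\oplus a=\{t\in\mathbb T:t\le a\}$; for subsets, $S\oplus S'=\bigcup s\oplus s'$, and iterated sums are defined accordingly. A hyperring homomorphism $\varphi:A\to\mathbb T$ satisfies $\varphi(0)=-\infty$, $\varphi(1)=0$, $\varphi(xy)=\varphi(x)+\varphi(y)$, $\varphi(x+y)\in\varphi(x)\oplus\varphi(y)$. For a $k$-algebra $B$, $\operatorname{Hom}_k(B,\mathbb T)$ is the set of such homomorphisms restricting to $\nu$ on $k$. Let $j_1,j_2:A\to A\otimes_kA$ be $j_1(a)=a\otimes1$, $j_2(a)=1\otimes a$. Berkovich's hyperoperation in Hopf-algebraic form: $g\star h=\{f\in\operatorname{Hom}_k(A,\mathbb T):\exists\beta\in\operatorname{Hom}_k(A\otimes_kA,\mathbb T)\text{ with }\beta\circ j_1=g,\ \beta\circ j_2=h,\ f=\beta\circ\Delta\}$. Connes–Consani hyperoperation: $g*h=\{f\in\operatorname{Hom}_k(A,\mathbb T): f(a)\in\bigoplus g(a_{(1)})\odot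 h(a_{(2)})\text{ for all }a\in A\text{ and every expression }\Delta(a)=\sum a_{(1)}\otimes a_{(2)}\}$, where $\odot$ is the multiplication of $\mathbb T$. *)

From Stdlib Require Import Rdefinitions Raxioms Rbasic_fun.
From HB Require Import structures.
From mathcomp Require Import all_boot all_order all_algebra.
Set Implicit Arguments. Unset Strict Implicit. Unset Printing Implicit Defensive.
Import GRing.Theory.
Local Open Scope ring_scope.

(* The tropical hyperfield  T = R ∪ {-oo}  (None stands for -oo).     *)
Definition T : Type := option R.
Definition Tninf : T := None.

Definition Tle (a b : T) : Prop :=
  match a, b with
  | None, _ => True
  | Some _, None => False
  | Some x, Some y => Rle x y
  end.

Definition Tlt (a b : T) : Prop := Tle a b /\ a <> b.

Definition Tmax (a b : T) : T :=
  match a, b with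
  | None, _ => b
  | _, None => a
  | Some x, Some y => Some (Rmax x y)
  end.

Definition Tmul (a b : T) : T :=
  match a, b with
  | Some x, Some y => Some (Rplus x y)
  | _, _ => None
  end.

Definition hadd (a b : T) : T -> Prop :=
  fun t => (a <> b /\ t = Tmax a b) \/ (a = b /\ Tle t a).

(* iterated hypersum of a finite family, with S (+) S' = U s (+) s';
   the empty sum is {-oo} (the neutral element). *)
Fixpoint hsum (l : seq T) : T -> Prop :=
  match l with
  | [::] => fun t => t = Tninf
  | x :: l' => fun t => exists s, hsum l' s /\ hadd x s t
  end.

Definition hyper_hom (A : nzRingType) (phi : A -> T) : Prop :=
  [/\ phi 0 = Tninf, phi 1 = Some R0,
      forall x y, phi (x * y) = Tmul (phi x) (phi y)
    & forall x y, hadd (phi x) (phi y) (phi (x + y))].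

(* A valuation on k is a hyperring homomorphism k -> T
   (this encodes nu(ab)=nu a+nu b and nu(a+b) <= max, i.e. non-Archimedean). *)
Definition valuation (k : fieldType) (nu : k -> T) : Prop := hyper_hom nu.

(* completeness of k w.r.t. nu: nu-Cauchy sequences converge. Small
   distance = very negative nu (nu = log |.|). *)
Definition nu_complete (k : fieldType) (nu : k -> T) : Prop :=
  forall u : nat -> k,
    (forall M : R, exists N : nat, forall m n : nat, (N <= m)%N -> (N <= n)%N ->
        Tlt (nu (u m - u n)) (Some M)) ->
    exists l : k, forall M : R, exists N : nat, forall n : nat, (N <= n)%N ->
        Tlt (nu (u n - l)) (Some M).

Definition homk (k : fieldType) (nu : k -> T) (B : comAlgType k) (phi : B -> T)
  : Prop := hyper_hom phi /\ forall c : k, phi (c%:A) = nu c.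

Definition kalg_hom (k : fieldType) (A B : comAlgType k) (f : A -> B) : Prop :=
  [/\ forall x y, f (x + y) = f x + f y,
      forall x y, f (x * y) = f x * f y,
      f 1 = 1
    & forall (c : k) x, f (c *: x) = c *: f x].

(* (B, j1, j2) is the tensor product A (x)_k A with j1 a = a (x) 1 and
   j2 a = 1 (x) a, characterized by its universal property as the
   coproduct of A with itself in commutative k-algebras. *)
Definition is_tensor_square (k : fieldType) (A B : comAlgType k)
  (j1 j2 : A -> B) : Prop :=
  [/\ kalg_hom j1, kalg_hom j2 &
    forall (C : comAlgType k) (u v : A -> C), kalg_hom u -> kalg_hom v ->
      exists w : B -> C, [/\ kalg_hom w, w \o j1 =1 u, w \o j2 =1 v &
        forall w' : B -> C, kalg_hom w' -> w' \o j1 =1 u -> w' \o j2 =1 v ->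
          w' =1 w]].

Definition is_tensor_cube (k : fieldType) (A B3 : comAlgType k)
  (i1 i2 i3 : A -> B3) : Prop :=
  [/\ kalg_hom i1, kalg_hom i2, kalg_hom i3 &
    forall (C : comAlgType k) (u v x : A -> C),
      kalg_hom u -> kalg_hom v -> kalg_hom x ->
      exists w : B3 -> C, [/\ kalg_hom w, w \o i1 =1 u, w \o i2 =1 v,
        w \o i3 =1 x &
        forall w' : B3 -> C, kalg_hom w' -> w' \o i1 =1 u -> w' \o i2 =1 v ->
          w' \o i3 =1 x -> w' =1 w]].

(* pure tensor a1 (x) a2 = (a1 (x) 1)(1 (x) a2) *)
Definition tens (k : fieldType) (A B : comAlgType k) (j1 j2 : A -> B)
  (p : A * A) : B := j1 p.1 * j2 p.2.

(* "Delta(a) = sum a_(1) (x) a_(2)" : an expression of Delta(a) as a finite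
   sum of pure tensors, given by the list of pairs (a_(1), a_(2)). *)
Definition expr_of (k : fieldType) (A B : comAlgType k) (j1 j2 : A -> B)
  (Delta : A -> B) (a : A) (l : seq (A * A)) : Prop :=
  Delta a = \sum_(p <- l) tens j1 j2 p.

Definition fin_gen (k : fieldType) (A : comAlgType k) : Prop :=
  exists gens : seq A, forall P : A -> Prop,
    (forall x, x \in gens -> P x) -> (forall c : k, P (c%:A)) ->
    (forall x y, P x -> P y -> P (x + y)) ->
    (forall x y, P x -> P y -> P (x * y)) ->
    forall a, P a.

Definition is_hopf (k : fieldType) (A B : comAlgType k) (j1 j2 : A -> B)
  (Delta : A -> B) : Prop :=
  kalg_hom Delta /\
  (* coassociativity: (Delta (x) id) o Delta = (id (x) Delta) o Delta *)
  (exists (B3 : comAlgType k) (i1 i2 i3 : A -> B3),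
     is_tensor_cube i1 i2 i3 /\
     forall (w12 w23 L Rm : B -> B3),
       kalg_hom w12 -> w12 \o j1 =1 i1 -> w12 \o j2 =1 i2 ->
       kalg_hom w23 -> w23 \o j1 =1 i2 -> w23 \o j2 =1 i3 ->
       kalg_hom L -> L \o j1 =1 w12 \o Delta -> L \o j2 =1 i3 ->
       kalg_hom Rm -> Rm \o j1 =1 i1 -> Rm \o j2 =1 w23 \o Delta ->
       L \o Delta =1 Rm \o Delta) /\
  (exists (eps : A -> k) (S : A -> A),
     [/\ forall x y, eps (x + y) = eps x + eps y,
         forall x y, eps (x * y) = eps x * eps y,
         eps 1 = 1 &
         forall (c : k) x, eps (c *: x) = c * eps x] /\
     [/\ forall (c : k) x, S (c *: x) = c *: S x,
         forall x y, S (x + y) = S x + S y &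
         forall a l, expr_of j1 j2 Delta a l ->
           [/\ \sum_(p <- l) eps p.1 *: p.2 = a,
               \sum_(p <- l) eps p.2 *: p.1 = a,
               \sum_(p <- l) S p.1 * p.2 = (eps a)%:A &
               \sum_(p <- l) p.1 * S p.2 = (eps a)%:A]]).

Definition berk_star (k : fieldType) (nu : k -> T) (A B : comAlgType k)
  (j1 j2 Delta : A -> B) (g h : A -> T) : (A -> T) -> Prop :=
  fun f => homk nu f /\
    exists beta : B -> T, [/\ homk nu beta, beta \o j1 =1 g, beta \o j2 =1 h &
                              f =1 beta \o Delta].

Definition cc_star (k : fieldType) (nu : k -> T) (A B : comAlgType k)
  (j1 j2 Delta : A -> B) (g h : A -> T) : (A -> T) -> Prop :=
  fun f => homk nu f /\
    forall (a : A) (l : seq (A * A)), expr_of j1 j2 Delta a l ->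
      hsum [seq Tmul (g p.1) (h p.2) | p <- l] (f a).

From Stdlib Require Import Rdefinitions.
From HB Require Import structures.
From mathcomp Require Import all_boot all_order all_algebra.
Set Implicit Arguments. Unset Strict Implicit. Unset Printing Implicit Defensive.
Import GRing.Theory.
Local Open Scope ring_scope.

(* If [f = beta o Delta] with [beta] lying over [(g, h)], then for any
   expression [Delta a = \sum a_(1) (x) a_(2)], multiplicativity gives
   [beta (a_(1) (x) a_(2)) = g a_(1) + h a_(2)] and hyperadditivity puts
   [beta (Delta a)] in the hypersum of these values. *)

Lemma hyper_hom_sum (R : nzRingType) (phi : R -> T) (I : Type)
    (F : I -> R) (l : seq I) :
  hyper_hom phi -> hsum [seq phi (F i) | i <- l] (phi (\sum_(i <- l) F i)).
Proof.
move=> [phi0 _ _ phiD]; elim: l => [|i l IHl] /=; first by rewrite big_nil.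
by rewrite big_cons; exists (phi (\sum_(i <- l) F i)).
Qed.

Lemma hyper_hom_tens (k : fieldType) (A B : comAlgType k) (j1 j2 : A -> B)
    (beta : B -> T) (g h : A -> T) :
  hyper_hom beta -> beta \o j1 =1 g -> beta \o j2 =1 h ->
  forall p : A * A, beta (tens j1 j2 p) = Tmul (g p.1) (h p.2).
Proof.
by move=> [_ _ betaM _] beta_j1 beta_j2 p; rewrite /tens betaM -beta_j1 -beta_j2.
Qed.

Lemma berk_star_sub_cc_star (k : fieldType) (nu : k -> T)
    (A B : comAlgType k) (j1 j2 Delta : A -> B) (g h f : A -> T) :
  berk_star nu j1 j2 Delta g h f -> cc_star nu j1 j2 Delta g h f.
Proof.
move=> [homf [beta [[beta_hom _] beta_j1 beta_j2 f_beta]]].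
split=> // a l Delta_a; rewrite f_beta /= Delta_a.
have <- : [seq beta (tens j1 j2 p) | p <- l] = [seq Tmul (g p.1) (h p.2) | p <- l].
  exact/eq_map/(hyper_hom_tens beta_hom beta_j1 beta_j2).
exact: hyper_hom_sum.
Qed.

Theorem proposition5p20 (k : fieldType) (nu : k -> T)
  (Hnu : valuation nu) (Hcomplete : nu_complete nu)
  (A B : comAlgType k) (j1 j2 Delta : A -> B)
  (HB : is_tensor_square j1 j2) (Hfg : fin_gen A)
  (Hhopf : is_hopf j1 j2 Delta)
  (g h : A -> T) (Hg : homk nu g) (Hh : homk nu h) :
  forall f : A -> T,
    berk_star nu j1 j2 Delta g h f -> cc_star nu j1 j2 Delta g h f.
Proof. move=> f; exact: berk_star_sub_cc_star. Qed.
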